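(* Let $S$ be an inverse semigroup. Then $S$ is a weak semilattice if and only if $\mathsf{D}(S)$ is a $\wedge$-semigroup.
   Context: For $X\subseteq S$ let $X^{\downarrow}=\{s\in S : s\le x \text{ for some } x\in X\}$ (natural partial order), and $a^{\downarrow}=\{a\}^{\downarrow}$. Elements $s,t$ are compatible if $s^{-1}t$ and $st^{-1}$ are idempotents. $\mathsf{D}(S)$ is the set of all subsets of $S$ of the form $\{a_1,\dots,a_m\}^{\downarrow}$ where $\{a_1,\dots,a_m\}$ is a finite (possibly empty) set of pairwise compatible elements of $S$; it is an inverse semigroup under subset multiplication, whose natural partial order is inclusion. $S$ is a weak semilattice if for all $a,b\in S$ the set $a^{\downarrow}\cap b^{\downarrow}$ equals $F^{\downarrow}$ for some finite subset $F\subseteq S$. An inverse semigroup is a $\wedge$-semigroup if every pair of elements has a meet with respect to the natural partial order. *)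

From Stdlib Require Import List.
Import ListNotations.

(* This is the standard definition (regular semigroup with
   commuting idempotents; the inverse is then unique). *)
Record InverseSemigroup := {
  carrier :> Type;
  mul : carrier -> carrier -> carrier;
  inv : carrier -> carrier;
  mulA : forall x y z, mul x (mul y z) = mul (mul x y) z;
  mul_inv_mul : forall x, mul (mul x (inv x)) x = x;
  inv_mul_inv : forall x, mul (mul (inv x) x) (inv x) = inv x;
  idem_comm : forall e f, mul e e = e -> mul f f = f -> mul e f = mul f e
}.

Section Defs.
Variable S : InverseSemigroup.

Definition idempotent (e : S) : Prop := mul S e e = e.

Definition nle (s t : S) : Prop := exists e : S, idempotent e /\ s = mul S e t.

Definition down (X : S -> Prop) : S -> Prop :=
  fun s => exists x, X x /\ nle s x.

Definition down1 (a : S) : S -> Prop := down (fun x => x = a).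

Definition of_list (l : list S) : S -> Prop := fun x => In x l.

Definition compatible (s t : S) : Prop :=
  idempotent (mul S (inv S s) t) /\ idempotent (mul S s (inv S t)).

Definition pairwise_compatible (l : list S) : Prop :=
  forall x y, In x l -> In y l -> compatible x y.

Definition inD (A : S -> Prop) : Prop :=
  exists l : list S, pairwise_compatible l /\ A = down (of_list l).

Definition subset (A B : S -> Prop) : Prop := forall x, A x -> B x.

Definition inter (A B : S -> Prop) : S -> Prop := fun x => A x /\ B x.

Definition weak_semilattice : Prop :=
  forall a b : S, exists F : list S, inter (down1 a) (down1 b) = down (of_list F).

(* D(S) is a wedge-semigroup: every pair of elements of D(S) has a meet
   with respect to the natural partial order of D(S), which is inclusion. *)
Definition D_wedge_semigroup : Prop :=
  forall A B, inD A -> inD B ->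
    exists C, inD C /\ subset C A /\ subset C B /\
      (forall E, inD E -> subset E A -> subset E B -> subset E C).

End Defs.

(* Every element of D(S) is the down-closure of a finite list, and the
   intersection of two such down-closures is the finite union of the sets
   a↓ ∩ b↓.  In a weak semilattice each of these is finitely generated, and
   since compatibility passes to smaller elements the generators are again
   pairwise compatible; so D(S) is closed under intersection, which is the
   meet for inclusion.  Conversely, the meet C of a↓ and b↓ in D(S) is all of
   a↓ ∩ b↓: for x in the intersection, x↓ is in D(S) and lies below both, hence
   x↓ ⊆ C. *)

From Stdlib Require Import List FunctionalExtensionality PropExtensionality.
Import ListNotations.

Section InverseSemigroupTheory.
Variable S : InverseSemigroup.
Local Infix "⋅" := (mul S) (at level 40, left associativity).
Local Notation "x ^-1" := (inv S x) (at level 2, left associativity, format "x ^-1").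

Ltac reassoc := repeat rewrite (mulA S); reflexivity.

Lemma idempotent_mulV (x : S) : idempotent S (x ⋅ x^-1).
Proof. unfold idempotent. rewrite mulA, mul_inv_mul. reflexivity. Qed.

Lemma idempotent_Vmul (x : S) : idempotent S (x^-1 ⋅ x).
Proof. unfold idempotent. rewrite mulA, inv_mul_inv. reflexivity. Qed.

Lemma idempotentM (e f : S) :
  idempotent S e -> idempotent S f -> idempotent S (e ⋅ f).
Proof.
  unfold idempotent; intros He Hf.
  transitivity (e ⋅ (f ⋅ e) ⋅ f); [reassoc|].
  rewrite (idem_comm S f e Hf He).
  transitivity ((e ⋅ e) ⋅ (f ⋅ f)); [reassoc|].
  rewrite He, Hf. reflexivity.
Qed.

Lemma idempotent_conj (e s : S) : idempotent S e -> idempotent S (s^-1 ⋅ e ⋅ s).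
Proof.
  unfold idempotent; intro He.
  transitivity (s^-1 ⋅ (e ⋅ (s ⋅ s^-1)) ⋅ e ⋅ s); [reassoc|].
  rewrite (idem_comm S _ _ He (idempotent_mulV s)).
  transitivity ((s^-1 ⋅ s ⋅ s^-1) ⋅ (e ⋅ e) ⋅ s); [reassoc|].
  rewrite inv_mul_inv, He. reflexivity.
Qed.

Lemma inv_unique (x y : S) : x ⋅ y ⋅ x = x -> y ⋅ x ⋅ y = y -> y = x^-1.
Proof.
  intros xyx yxy.
  assert (Eyx : idempotent S (y ⋅ x)).
  { unfold idempotent. transitivity (y ⋅ x ⋅ y ⋅ x); [reassoc|]. rewrite yxy. reflexivity. }
  assert (Exy : idempotent S (x ⋅ y)).
  { unfold idempotent. transitivity (x ⋅ y ⋅ x ⋅ y); [reassoc|]. rewrite xyx. reflexivity. }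
  transitivity (y ⋅ x ⋅ x^-1).
  - transitivity (y ⋅ (x ⋅ x^-1 ⋅ x) ⋅ y); [rewrite mul_inv_mul, yxy; reflexivity|].
    transitivity (y ⋅ ((x ⋅ x^-1) ⋅ (x ⋅ y))); [reassoc|].
    rewrite (idem_comm S _ _ (idempotent_mulV x) Exy).
    transitivity ((y ⋅ x ⋅ y) ⋅ (x ⋅ x^-1)); [reassoc|].
    rewrite yxy. reassoc.
  - transitivity (y ⋅ x ⋅ (x^-1 ⋅ x ⋅ x^-1)); [rewrite inv_mul_inv; reflexivity|].
    transitivity ((y ⋅ x) ⋅ (x^-1 ⋅ x) ⋅ x^-1); [reassoc|].
    rewrite <- (idem_comm S _ _ (idempotent_Vmul x) Eyx).
    transitivity (x^-1 ⋅ (x ⋅ y ⋅ x) ⋅ x^-1); [reassoc|].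
    rewrite xyx. apply inv_mul_inv.
Qed.

Lemma inv_idempotent_mul (e s : S) : idempotent S e -> (e ⋅ s)^-1 = s^-1 ⋅ e.
Proof.
  intro He. symmetry. apply inv_unique.
  - transitivity (e ⋅ ((s ⋅ s^-1) ⋅ (e ⋅ e)) ⋅ s); [reassoc|].
    rewrite He, (idem_comm S _ _ (idempotent_mulV s) He).
    transitivity ((e ⋅ e) ⋅ (s ⋅ s^-1 ⋅ s)); [reassoc|].
    rewrite He, mul_inv_mul. reflexivity.
  - transitivity (s^-1 ⋅ ((e ⋅ e) ⋅ (s ⋅ s^-1)) ⋅ e); [reassoc|].
    rewrite He, (idem_comm S _ _ He (idempotent_mulV s)).
    transitivity ((s^-1 ⋅ s ⋅ s^-1) ⋅ (e ⋅ e)); [reassoc|].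
    rewrite He, inv_mul_inv. reflexivity.
Qed.

Lemma nle_refl (x : S) : nle S x x.
Proof. exists (x ⋅ x^-1). split; [apply idempotent_mulV | symmetry; apply mul_inv_mul]. Qed.

Lemma nle_trans (x y z : S) : nle S x y -> nle S y z -> nle S x z.
Proof.
  intros [e [He ->]] [f [Hf ->]].
  exists (e ⋅ f). split; [apply idempotentM; assumption | apply mulA].
Qed.

Lemma compatible_nle (s t s' t' : S) :
  compatible S s t -> nle S s' s -> nle S t' t -> compatible S s' t'.
Proof.
  intros [Hst Hst'] [e [He ->]] [f [Hf ->]]. unfold compatible.
  rewrite !inv_idempotent_mul by assumption. split.
  - replace (s^-1 ⋅ e ⋅ (f ⋅ t)) with ((s^-1 ⋅ (e ⋅ f) ⋅ s) ⋅ (s^-1 ⋅ t)).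
    + apply idempotentM; [apply idempotent_conj, idempotentM|]; assumption.
    + transitivity (s^-1 ⋅ ((e ⋅ f) ⋅ (s ⋅ s^-1)) ⋅ t); [reassoc|].
      rewrite (idem_comm S _ _ (idempotentM _ _ He Hf) (idempotent_mulV s)).
      transitivity ((s^-1 ⋅ s ⋅ s^-1) ⋅ e ⋅ f ⋅ t); [reassoc|].
      rewrite inv_mul_inv. reassoc.
  - replace (e ⋅ s ⋅ (t^-1 ⋅ f)) with (e ⋅ (s ⋅ t^-1) ⋅ f) by reassoc.
    apply idempotentM; [apply idempotentM|]; assumption.
Qed.

Lemma pred_ext (A B : S -> Prop) : (forall x, A x <-> B x) -> A = B.
Proof.
  intro AB. apply functional_extensionality; intro x.
  apply propositional_extensionality, AB.
Qed.

Lemma down1E (a x : S) : down1 S a x <-> nle S x a.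
Proof. split; [intros [y [-> H]]; exact H | intro H; exists a; auto]. Qed.

Lemma down_of_list_nil (x : S) : ~ down S (of_list S []) x.
Proof. intros [y [[] _]]. Qed.

Lemma down_of_list_app (l1 l2 : list S) (x : S) :
  down S (of_list S (l1 ++ l2)) x <->
  down S (of_list S l1) x \/ down S (of_list S l2) x.
Proof.
  unfold down, of_list. setoid_rewrite in_app_iff. firstorder.
Qed.

Lemma down_of_list_cons (a : S) (l : list S) (x : S) :
  down S (of_list S (a :: l)) x <-> nle S x a \/ down S (of_list S l) x.
Proof.
  change (a :: l) with ([a] ++ l). rewrite down_of_list_app.
  enough (down S (of_list S [a]) x <-> nle S x a) as -> by reflexivity.
  split; [intros [y [[<- | []] H]]; exact H | intro H; exists a; split; [left|]; auto].
Qed.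

Lemma inD_down1 (a : S) : inD S (down1 S a).
Proof.
  exists [a]. split.
  - intros x y [<- | []] [<- | []]. split; [apply idempotent_Vmul | apply idempotent_mulV].
  - apply pred_ext; intro x. rewrite down1E, down_of_list_cons.
    split; [left; assumption | intros [H | H]; [exact H | contradiction (down_of_list_nil x)]].
Qed.

Lemma down1_nle_subset (x a : S) : nle S x a -> subset S (down1 S x) (down1 S a).
Proof. intros xa y. rewrite !down1E. intro yx. exact (nle_trans _ _ _ yx xa). Qed.

Definition finitely_generated (X : S -> Prop) : Prop :=
  exists F : list S, forall x, X x <-> down S (of_list S F) x.

Lemma finitely_generated_ext (X Y : S -> Prop) :
  (forall x, X x <-> Y x) -> finitely_generated X -> finitely_generated Y.
Proof. intros XY [F HF]. exists F. intro x. rewrite <- XY. apply HF. Qed.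

Lemma finitely_generated_union {I : Type} (l : list I) (P : I -> S -> Prop) :
  (forall i, In i l -> finitely_generated (P i)) ->
  finitely_generated (fun x => exists i, In i l /\ P i x).
Proof.
  induction l as [| i l IH]; intro fgP.
  - exists []. intro x. split; [intros [? [[] _]] | intro H; contradiction (down_of_list_nil x)].
  - destruct (fgP i (or_introl eq_refl)) as [Fi HFi].
    destruct IH as [F HF]; [intros j lj; apply fgP; right; exact lj|].
    exists (Fi ++ F). intro x. rewrite down_of_list_app, <- HFi, <- HF. simpl.
    firstorder congruence.
Qed.

Lemma weak_semilattice_inter_fg (W : weak_semilattice S) (l1 l2 : list S) :
  finitely_generated (inter S (down S (of_list S l1)) (down S (of_list S l2))).
Proof.
  apply (finitely_generated_ext
    (fun x => exists a, In a l1 /\ exists b, In b l2 /\ inter S (down1 S a) (down1 S b) x)).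
  { intro x. unfold inter, down, of_list. setoid_rewrite down1E. firstorder. }
  apply finitely_generated_union; intros a _.
  apply finitely_generated_union; intros b _.
  destruct (W a b) as [F HF]. exists F. rewrite HF. reflexivity.
Qed.

Lemma inD_inter (W : weak_semilattice S) (A B : S -> Prop) :
  inD S A -> inD S B -> inD S (inter S A B).
Proof.
  intros [l1 [compat1 ->]] [l2 [_ ->]].
  destruct (weak_semilattice_inter_fg W l1 l2) as [F HF].
  exists F. split; [| apply pred_ext; exact HF].
  intros y y' Fy Fy'.
  assert (A_y : down S (of_list S l1) y) by (apply HF; exists y; split; [exact Fy | apply nle_refl]).
  assert (A_y' : down S (of_list S l1) y') by (apply HF; exists y'; split; [exact Fy' | apply nle_refl]).
  destruct A_y as [a [l1a ya]], A_y' as [a' [l1a' ya']].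
  exact (compatible_nle _ _ _ _ (compat1 a a' l1a l1a') ya ya').
Qed.

End InverseSemigroupTheory.

Theorem lemma1p16 (S : InverseSemigroup) :
  weak_semilattice S <-> D_wedge_semigroup S.
Proof.
  split.
  - intros W A B DA DB. exists (inter S A B).
    split; [apply inD_inter; assumption |].
    split; [intros x [Ax _]; exact Ax |].
    split; [intros x [_ Bx]; exact Bx |].
    intros E _ EA EB x Ex. split; [apply EA | apply EB]; exact Ex.
  - intros Dw a b.
    destruct (Dw _ _ (inD_down1 S a) (inD_down1 S b))
      as [C [[F [_ ->]] [Ca [Cb Cmax]]]].
    exists F. apply pred_ext; intro x. split.
    + intros [xa xb]. rewrite down1E in xa, xb.
      apply (Cmax (down1 S x) (inD_down1 S x)
                  (down1_nle_subset S x a xa) (down1_nle_subset S x b xb)).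
      apply down1E, nle_refl.
    + intro Cx. split; [apply Ca | apply Cb]; exact Cx.
Qed.
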